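(* Let $\mathbb{E}$ be a finitely complete category, $\Sigma$ a fibrational class of split epimorphisms, and suppose $\mathbb{E}$ is a $\Sigma$-Mal'tsev category. Let $d_0,d_1\colon X_1\rightrightarrows X_0$, $s_0\colon X_0\to X_1$ be a reflexive graph. The following are equivalent: (1) the graph underlies a $\Sigma$-groupoid; (2) the kernel relation $R[d_0]$ is a $\Sigma$-relation and $[R[d_0],R[d_1]]=0$. Moreover, a reflexive relation $S$ on $X$ (with first projection $d_0\colon S\to X$) is a $\Sigma$-equivalence relation if and only if the kernel relation $R[d_0]$ of $d_0\colon S\to X$ is a $\Sigma$-relation.
   Context: A split epimorphism is a pair $(f,s)$ with $fs=1$. A class $\Sigma$ of split epimorphisms is fibrational if it contains all split epimorphisms $(f,s)$ with $f$ invertible and is stable under pullback along any morphism. A pair of morphisms with common codomain $Z$ is jointly extremally epic if it factors jointly through no non-invertible monomorphism into $Z$. $\mathbb{E}$ is $\Sigma$-Mal'tsev if for every split epimorphism $(f,s)\colon X\rightleftarrows Y$ in $\Sigma$ and every split epimorphism $(g,t)$ with $g\colon Y'\to Y$, letting $X'=Y'\times_YX$, $s'=(1_{Y'},sg)$, $\bar t=(tf,1_X)$, the pair $(s',\bar t)$ is jointly extremally epic. A $\Sigma$-relation is a reflexive relation $(d_0,d_1)\colon S\rightarrowtail X\times X$ with reflexivity $s_0$ such that $(d_0,s_0)\in\Sigma$; a $\Sigma$-equivalence relation is an equivalence relation which is a $\Sigma$-relation; a $\Sigma$-groupoid is an internal groupoid whose underlying reflexive graph $(d_0,d_1,s_0)$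 has $(d_0,s_0)\in\Sigma$. The kernel relation $R[f]$ of $f\colon A\to B$ is $A\times_BA$ with its two projections and the diagonal. For reflexive relations $R,S$ on $X$, $R\times_XS$ is the pullback of $d_0^S$ along $d_1^R$ (elements $xRySz$), $\sigma_0^R\colon R\to R\times_XS$, $xRy\mapsto xRySy$, and $\sigma_0^S\colon S\to R\times_XS$, $ySz\mapsto yRySz$. $[R,S]=0$ means there is a morphism $p\colon R\times_XS\to X$ with $p\sigma_0^R=d_0^R$ and $p\sigma_0^S=d_1^S$. *)

Set Implicit Arguments.
Unset Strict Implicit.

Record Cat := {
  Ob :> Type;
  Hom : Ob -> Ob -> Type;
  idm : forall A, Hom A A;
  comp : forall A B C, Hom B C -> Hom A B -> Hom A C;
  comp_id_l : forall A B (f : Hom A B), comp (idm B) f = f;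
  comp_id_r : forall A B (f : Hom A B), comp f (idm A) = f;
  comp_assoc : forall A B C D (f : Hom A B) (g : Hom B C) (h : Hom C D),
      comp h (comp g f) = comp (comp h g) f
}.

Arguments Hom {c} _ _.
Arguments idm {c} A.
Arguments comp {c A B C} _ _.
Notation "g ∘ f" := (comp g f) (at level 40, left associativity).

Section Basics.
Variable E : Cat.

Definition IsIso {A B : E} (f : Hom A B) : Prop :=
  exists g : Hom B A, f ∘ g = idm B /\ g ∘ f = idm A.

Definition Mono {A B : E} (m : Hom A B) : Prop :=
  forall T (u v : Hom T A), m ∘ u = m ∘ v -> u = v.

Record IsPullback {A B C P : E} (f : Hom A C) (g : Hom B C)
    (p1 : Hom P A) (p2 : Hom P B) : Prop := {
  pb_comm : f ∘ p1 = g ∘ p2;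
  pb_univ : forall T (a : Hom T A) (b : Hom T B), f ∘ a = g ∘ b ->
      exists! u : Hom T P, p1 ∘ u = a /\ p2 ∘ u = b
}.

Record Pb {A B C : E} (f : Hom A C) (g : Hom B C) := {
  pb_ob : E;
  pb_p1 : Hom pb_ob A;
  pb_p2 : Hom pb_ob B;
  pb_is : IsPullback f g pb_p1 pb_p2
}.

Definition IsTerminal (Z : E) : Prop :=
  forall X : E, exists t : Hom X Z, forall t' : Hom X Z, t' = t.

End Basics.

Arguments pb_ob {E A B C f g} _.
Arguments pb_p1 {E A B C f g} _.
Arguments pb_p2 {E A B C f g} _.

Record FinComplete (E : Cat) := {
  term : E;
  term_is : IsTerminal term;
  pb : forall (A B C : E) (f : Hom A C) (g : Hom B C), Pb f g
}.
Arguments pb {E} _ {A B C} f g.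

Definition SplitEpiClass (E : Cat) :=
  forall (X Y : E), Hom X Y -> Hom Y X -> Prop.

Section Sigma.
Variable E : Cat.
Variable L : FinComplete E.
Variable Sig : SplitEpiClass E.

Definition IsSplitEpiClass : Prop :=
  forall (X Y : E) (f : Hom X Y) (s : Hom Y X), Sig f s -> f ∘ s = idm Y.

Definition Fibrational : Prop :=
  (forall (X Y : E) (f : Hom X Y) (s : Hom Y X),
      f ∘ s = idm Y -> IsIso f -> Sig f s) /\
  (forall (X Y : E) (f : Hom X Y) (s : Hom Y X), Sig f s ->
   forall (Y' P : E) (g : Hom Y' Y) (p1 : Hom P Y') (p2 : Hom P X),
      IsPullback g f p1 p2 ->
      forall s' : Hom Y' P, p1 ∘ s' = idm Y' -> p2 ∘ s' = s ∘ g ->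
      Sig p1 s').

Definition JointlyExtremalEpic {A B Z : E} (a : Hom A Z) (b : Hom B Z) : Prop :=
  forall (M : E) (m : Hom M Z), Mono m ->
    (exists a' : Hom A M, m ∘ a' = a) ->
    (exists b' : Hom B M, m ∘ b' = b) -> IsIso m.

Definition SigmaMaltsev : Prop :=
  forall (X Y : E) (f : Hom X Y) (s : Hom Y X), Sig f s ->
  forall (Y' : E) (g : Hom Y' Y) (t : Hom Y Y'), g ∘ t = idm Y ->
  let P := pb L g f in
  forall (s' : Hom Y' (pb_ob P)) (tb : Hom X (pb_ob P)),
    pb_p1 P ∘ s' = idm Y' -> pb_p2 P ∘ s' = s ∘ g ->
    pb_p1 P ∘ tb = t ∘ f -> pb_p2 P ∘ tb = idm X ->
    JointlyExtremalEpic s' tb.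

Definition ReflRel {S X : E} (d0 d1 : Hom S X) (s0 : Hom X S) : Prop :=
  (forall T (u v : Hom T S), d0 ∘ u = d0 ∘ v -> d1 ∘ u = d1 ∘ v -> u = v) /\
  d0 ∘ s0 = idm X /\ d1 ∘ s0 = idm X.

Definition SigRel {S X : E} (d0 d1 : Hom S X) (s0 : Hom X S) : Prop :=
  ReflRel d0 d1 s0 /\ Sig d0 s0.

Definition EquivRel {S X : E} (d0 d1 : Hom S X) (s0 : Hom X S) : Prop :=
  ReflRel d0 d1 s0 /\
  (exists sigma : Hom S S, d0 ∘ sigma = d1 /\ d1 ∘ sigma = d0) /\
  (let P := pb L d1 d0 in
   exists tau : Hom (pb_ob P) S,
     d0 ∘ tau = d0 ∘ pb_p1 P /\ d1 ∘ tau = d1 ∘ pb_p2 P).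

Definition SigEquivRel {S X : E} (d0 d1 : Hom S X) (s0 : Hom X S) : Prop :=
  EquivRel d0 d1 s0 /\ Sig d0 s0.

Definition KernelSigRel {A B : E} (f : Hom A B) : Prop :=
  let K := pb L f f in
  exists delta : Hom A (pb_ob K),
    pb_p1 K ∘ delta = idm A /\ pb_p2 K ∘ delta = idm A /\
    SigRel (pb_p1 K) (pb_p2 K) delta.

Definition CommZero {R S X : E} (r0 r1 : Hom R X) (rs : Hom X R)
    (t0 t1 : Hom S X) (ts : Hom X S) : Prop :=
  let P := pb L r1 t0 in
  exists (p : Hom (pb_ob P) X) (sR : Hom R (pb_ob P)) (sS : Hom S (pb_ob P)),
    pb_p1 P ∘ sR = idm R /\ pb_p2 P ∘ sR = ts ∘ r1 /\
    pb_p1 P ∘ sS = rs ∘ t0 /\ pb_p2 P ∘ sS = idm S /\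
    p ∘ sR = r0 /\ p ∘ sS = t1.

Definition KernelCondition {X1 X0 : E} (d0 d1 : Hom X1 X0) : Prop :=
  let K0 := pb L d0 d0 in
  let K1 := pb L d1 d1 in
  exists (delta0 : Hom X1 (pb_ob K0)) (delta1 : Hom X1 (pb_ob K1)),
    pb_p1 K0 ∘ delta0 = idm X1 /\ pb_p2 K0 ∘ delta0 = idm X1 /\
    pb_p1 K1 ∘ delta1 = idm X1 /\ pb_p2 K1 ∘ delta1 = idm X1 /\
    SigRel (pb_p1 K0) (pb_p2 K0) delta0 /\
    CommZero (pb_p1 K0) (pb_p2 K0) delta0 (pb_p1 K1) (pb_p2 K1) delta1.

Definition ReflGraph {X1 X0 : E} (d0 d1 : Hom X1 X0) (s0 : Hom X0 X1) : Prop :=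
  d0 ∘ s0 = idm X0 /\ d1 ∘ s0 = idm X0.

(** internal groupoid structure on a reflexive graph; an arrow x goes from
    d0 x to d1 x; composable pairs (x,y) with d1 x = d0 y form the chosen
    pullback X2 of d1 and d0; m(x,y) : d0 x -> d1 y. *)
Definition IsGroupoid {X1 X0 : E} (d0 d1 : Hom X1 X0) (s0 : Hom X0 X1) : Prop :=
  ReflGraph d0 d1 s0 /\
  let P := pb L d1 d0 in
  let pi1 := pb_p1 P in
  let pi2 := pb_p2 P in
  exists (m : Hom (pb_ob P) X1) (i : Hom X1 X1),
    d0 ∘ m = d0 ∘ pi1 /\ d1 ∘ m = d1 ∘ pi2 /\
    (forall T (x : Hom T X1) (p : Hom T (pb_ob P)),
        pi1 ∘ p = s0 ∘ d0 ∘ x -> pi2 ∘ p = x -> m ∘ p = x) /\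
    (forall T (x : Hom T X1) (p : Hom T (pb_ob P)),
        pi1 ∘ p = x -> pi2 ∘ p = s0 ∘ d1 ∘ x -> m ∘ p = x) /\
    (forall T (p q r w : Hom T (pb_ob P)),
        pi2 ∘ p = pi1 ∘ r ->
        pi1 ∘ q = m ∘ p -> pi2 ∘ q = pi2 ∘ r ->
        pi1 ∘ w = pi1 ∘ p -> pi2 ∘ w = m ∘ r ->
        m ∘ q = m ∘ w) /\
    d0 ∘ i = d1 /\ d1 ∘ i = d0 /\
    (forall T (x : Hom T X1) (p : Hom T (pb_ob P)),
        pi1 ∘ p = x -> pi2 ∘ p = i ∘ x -> m ∘ p = s0 ∘ d0 ∘ x) /\
    (forall T (x : Hom T X1) (p : Hom T (pb_ob P)),
        pi1 ∘ p = i ∘ x -> pi2 ∘ p = x -> m ∘ p = s0 ∘ d1 ∘ x).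

Definition SigGroupoid {X1 X0 : E} (d0 d1 : Hom X1 X0) (s0 : Hom X0 X1) : Prop :=
  IsGroupoid d0 d1 s0 /\ Sig d0 s0.

End Sigma.

From Stdlib Require Import ClassicalEpsilon.

(* In a Σ-Mal'tsev category, pulling a Σ-split epimorphism back along a split
   epimorphism yields a jointly extremally epic pair of sections: two maps that agree
   on both sections are equal, and a map factors through a relation as soon as its
   restrictions to both sections do.

   For a groupoid, the division [(x, y) |-> x^-1 y] exhibits [R[d0]] as a pullback of
   [d0] along [d1], so [R[d0]] is a Σ-relation by fibrationality, and
   [(x, y, z) |-> x y^-1 z] makes [R[d0]] and [R[d1]] commute.  Conversely, from a
   connector [p] of [R[d0]] and [R[d1]] one defines composition [p (y, 1, x)] and
   inverse [p (1, x, 1)]; the Mal'tsev argument gives the identities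
   [p (x, x, z) = z], [p (x, y, y) = x] and the associativity of [p], from which the
   groupoid laws follow.  [(d0, s0)] lies in Σ because it is a pullback of the first
   projection of [R[d0]] along [s0].

   For a relation, symmetry and transitivity again exhibit [R[d0]] as a pullback of
   [d0] along [d1]; conversely, if [R[d0]] is a Σ-relation the Mal'tsev argument makes
   the relation difunctional, hence an equivalence relation. *)

Section Pullbacks.
Context {E : Cat}.

Lemma comp_eq_precomp2 {A B C D : E} {f : Hom B C} {g : Hom A B} {h : Hom A C} :
  f ∘ g = h -> forall x : Hom D A, f ∘ (g ∘ x) = h ∘ x.
Proof. intros H x. rewrite comp_assoc, H. reflexivity. Qed.

Lemma comp_eq_precomp3 {A B C D F : E} {f : Hom C D} {g : Hom B C} {h : Hom A B}
  {k : Hom A D} :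
  f ∘ (g ∘ h) = k -> forall x : Hom F A, f ∘ (g ∘ (h ∘ x)) = k ∘ x.
Proof. intros H x. rewrite <- H, <- !comp_assoc. reflexivity. Qed.

Lemma comp_eq_precomp4 {A B C D F G : E} {f : Hom D F} {g : Hom C D} {h : Hom B C}
  {i : Hom A B} {k : Hom A F} :
  f ∘ (g ∘ (h ∘ i)) = k -> forall x : Hom G A, f ∘ (g ∘ (h ∘ (i ∘ x))) = k ∘ x.
Proof. intros H x. rewrite <- H, <- !comp_assoc. reflexivity. Qed.

Lemma pullback_ext {A B C P : E} {f : Hom A C} {g : Hom B C} {p1 : Hom P A}
  {p2 : Hom P B} (H : IsPullback f g p1 p2) {T} (u v : Hom T P) :
  p1 ∘ u = p1 ∘ v -> p2 ∘ u = p2 ∘ v -> u = v.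
Proof.
  intros H1 H2.
  assert (e : f ∘ (p1 ∘ u) = g ∘ (p2 ∘ u))
    by (rewrite !comp_assoc, (pb_comm H); reflexivity).
  destruct (pb_univ H e) as [w [_ Hw]].
  transitivity w; [symmetry|]; apply Hw; split; auto.
Qed.

Lemma IsPullback_sym {A B C P : E} {f : Hom A C} {g : Hom B C} {p1 : Hom P A}
  {p2 : Hom P B} :
  IsPullback f g p1 p2 -> IsPullback g f p2 p1.
Proof.
  intros H. split.
  - symmetry. apply (pb_comm H).
  - intros T a b e. destruct (pb_univ H (eq_sym e)) as [u [[h1 h2] U]].
    exists u. split; [auto|]. intros u' [k1 k2]. apply U; auto.
Qed.

Definition pb_pair {A B C P : E} {f : Hom A C} {g : Hom B C} {p1 : Hom P A}
  {p2 : Hom P B} (H : IsPullback f g p1 p2) {T} (a : Hom T A) (b : Hom T B)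
  (e : f ∘ a = g ∘ b) : Hom T P.
Proof.
  refine (proj1_sig (constructive_indefinite_description
     (fun u => p1 ∘ u = a /\ p2 ∘ u = b) _)).
  destruct (pb_univ H e) as [u [Hu _]]. exists u. exact Hu.
Defined.

Section Pair.
Context {A B C P : E} {f : Hom A C} {g : Hom B C} {p1 : Hom P A} {p2 : Hom P B}
  (H : IsPullback f g p1 p2) {T} (a : Hom T A) (b : Hom T B) (e : f ∘ a = g ∘ b).

Lemma pb_pair_p1 : p1 ∘ pb_pair H a b e = a.
Proof.
  unfold pb_pair. destruct constructive_indefinite_description as [u [h1 h2]]. exact h1.
Qed.

Lemma pb_pair_p2 : p2 ∘ pb_pair H a b e = b.
Proof.
  unfold pb_pair. destruct constructive_indefinite_description as [u [h1 h2]]. exact h2.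
Qed.

Lemma pb_pair_p1_comp {D} (x : Hom D T) : p1 ∘ (pb_pair H a b e ∘ x) = a ∘ x.
Proof. apply comp_eq_precomp2, pb_pair_p1. Qed.

Lemma pb_pair_p2_comp {D} (x : Hom D T) : p2 ∘ (pb_pair H a b e ∘ x) = b ∘ x.
Proof. apply comp_eq_precomp2, pb_pair_p2. Qed.

End Pair.
End Pullbacks.

(* [normalize] associates composites to the right and drops identities, the form
   in which [rewrite_chain H] can rewrite with an equation [H] between composites. *)
Ltac normalize := repeat rewrite <- comp_assoc; rewrite ?comp_id_l, ?comp_id_r.
Ltac rewrite_chain H :=
  normalize;
  (rewrite H || rewrite (comp_eq_precomp2 H) || rewrite (comp_eq_precomp3 H)
   || rewrite (comp_eq_precomp4 H));
  normalize.
Ltac rewrite_chains H := repeat (rewrite_chain H).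
Ltac simpl_pairs :=
  normalize;
  repeat ((rewrite pb_pair_p1 || rewrite pb_pair_p2 || rewrite pb_pair_p1_comp
           || rewrite pb_pair_p2_comp); normalize).

Section JointlyExtremalEpic.
Context {E : Cat}.
Variable L : FinComplete E.

Definition JointlyMonic {S A B : E} (a : Hom S A) (b : Hom S B) : Prop :=
  forall T (u v : Hom T S), a ∘ u = a ∘ v -> b ∘ u = b ∘ v -> u = v.

Lemma to_term_unique (X : E) (u v : Hom X (term L)) : u = v.
Proof. destruct (term_is L X) as [t Ht]. rewrite (Ht u), (Ht v). reflexivity. Qed.

(* [M] is the pullback of [<a, b> : S -> A x B] along [<c, d> : P -> A x B], the
   product being a pullback over the terminal object. *)
Lemma jointly_monic_inverse_image {S A B P : E} (a : Hom S A) (b : Hom S B)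
  (c : Hom P A) (d : Hom P B) :
  JointlyMonic a b ->
  exists (M : E) (m : Hom M P) (e : Hom M S),
    Mono m /\ a ∘ e = c ∘ m /\ b ∘ e = d ∘ m /\
    forall Z (h : Hom Z P) (e' : Hom Z S), a ∘ e' = c ∘ h -> b ∘ e' = d ∘ h ->
      exists h', m ∘ h' = h.
Proof.
  intros J.
  destruct (term_is L A) as [tA _]. destruct (term_is L B) as [tB _].
  set (Pr := pb L tA tB). pose proof (pb_is Pr) as HPr.
  set (ab := pb_pair HPr a b (to_term_unique _ _ _)).
  set (cd := pb_pair HPr c d (to_term_unique _ _ _)).
  set (M := pb L cd ab). pose proof (pb_is M) as HM.
  assert (Ea : a ∘ pb_p2 M = c ∘ pb_p1 M).
  { transitivity (pb_p1 Pr ∘ (ab ∘ pb_p2 M)); [unfold ab; simpl_pairs; reflexivity|].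
    rewrite <- (pb_comm HM). unfold cd; simpl_pairs; reflexivity. }
  assert (Eb : b ∘ pb_p2 M = d ∘ pb_p1 M).
  { transitivity (pb_p2 Pr ∘ (ab ∘ pb_p2 M)); [unfold ab; simpl_pairs; reflexivity|].
    rewrite <- (pb_comm HM). unfold cd; simpl_pairs; reflexivity. }
  exists (pb_ob M), (pb_p1 M), (pb_p2 M). split; [|split; [|split]]; auto.
  - intros T u v H. apply (pullback_ext HM); auto. apply J.
    + rewrite !comp_assoc, Ea, <- !comp_assoc, H. reflexivity.
    + rewrite !comp_assoc, Eb, <- !comp_assoc, H. reflexivity.
  - intros Z h e' H1 H2.
    assert (Eq : cd ∘ h = ab ∘ e').
    { apply (pullback_ext HPr); unfold ab, cd; simpl_pairs; auto. }
    exists (pb_pair HM h e' Eq). apply pb_pair_p1.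
Qed.

Lemma jointly_extremal_epic_factor {Y X Q S A B : E} {s : Hom Y Q} {t : Hom X Q}
  (a : Hom S A) (b : Hom S B) (c : Hom Q A) (d : Hom Q B) :
  JointlyExtremalEpic s t -> JointlyMonic a b ->
  (exists e1, a ∘ e1 = c ∘ s /\ b ∘ e1 = d ∘ s) ->
  (exists e2, a ∘ e2 = c ∘ t /\ b ∘ e2 = d ∘ t) ->
  exists e, a ∘ e = c /\ b ∘ e = d.
Proof.
  intros J Jm [e1 [f1 g1]] [e2 [f2 g2]].
  destruct (jointly_monic_inverse_image a b c d Jm) as [M [m [e [Mm [E1 [E2 U]]]]]].
  destruct (J M m Mm) as [k [k1 k2]].
  - apply (U _ s e1); auto.
  - apply (U _ t e2); auto.
  - exists (e ∘ k). rewrite !comp_assoc, E1, E2, <- !comp_assoc, k1, !comp_id_r. auto.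
Qed.

Lemma jointly_extremal_epic_ext {Y X Q Z : E} {s : Hom Y Q} {t : Hom X Q}
  (h1 h2 : Hom Q Z) :
  JointlyExtremalEpic s t -> h1 ∘ s = h2 ∘ s -> h1 ∘ t = h2 ∘ t -> h1 = h2.
Proof.
  intros J H1 H2.
  assert (Jid : JointlyMonic (idm Z) (idm Z)).
  { intros T u v k _. rewrite !comp_id_l in k. exact k. }
  destruct (jointly_extremal_epic_factor (idm Z) (idm Z) h1 h2 J Jid) as [e [e1 e2]].
  - exists (h1 ∘ s). rewrite comp_id_l. auto.
  - exists (h1 ∘ t). rewrite comp_id_l. auto.
  - rewrite comp_id_l in e1, e2. rewrite <- e1, <- e2. reflexivity.
Qed.

Variable Sig : SplitEpiClass E.
Variable HMal : SigmaMaltsev L Sig.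

Lemma sigma_maltsev_pullback {X Y : E} {f : Hom X Y} {s : Hom Y X} : Sig _ _ f s ->
  forall {Y'} {g : Hom Y' Y} {t : Hom Y Y'}, g ∘ t = idm Y ->
  forall {Q} {q1 : Hom Q Y'} {q2 : Hom Q X}, IsPullback g f q1 q2 ->
  forall (s' : Hom Y' Q) (tb : Hom X Q),
    q1 ∘ s' = idm Y' -> q2 ∘ s' = s ∘ g -> q1 ∘ tb = t ∘ f -> q2 ∘ tb = idm X ->
    JointlyExtremalEpic s' tb.
Proof.
  intros Hs Y' g t Hgt Q q1 q2 HQ s' tb e1 e2 e3 e4.
  set (P := pb L g f). pose proof (pb_is P) as HP.
  set (phi := pb_pair HP q1 q2 (pb_comm HQ)).
  set (psi := pb_pair HQ (pb_p1 P) (pb_p2 P) (pb_comm HP)).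
  assert (I1 : psi ∘ phi = idm Q)
    by (apply (pullback_ext HQ); unfold psi, phi; simpl_pairs; reflexivity).
  assert (J : JointlyExtremalEpic (phi ∘ s') (phi ∘ tb)).
  { pose proof (HMal X Y f s Hs Y' g t Hgt) as HM; cbv zeta in HM.
    apply HM; unfold phi; simpl_pairs; auto. }
  intros M m Mm [a' ha] [b' hb].
  destruct (J M (phi ∘ m)) as [k [k1 k2]].
  - intros T u v H. apply Mm.
    transitivity (psi ∘ (phi ∘ m ∘ u)).
    { rewrite !comp_assoc, I1, comp_id_l. reflexivity. }
    rewrite H, !comp_assoc, I1, comp_id_l. reflexivity.
  - exists a'. rewrite <- comp_assoc, ha. reflexivity.
  - exists b'. rewrite <- comp_assoc, hb. reflexivity.
  - exists (k ∘ phi). split.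
    + transitivity (psi ∘ ((phi ∘ m) ∘ k) ∘ phi).
      { rewrite !comp_assoc, I1, comp_id_l. reflexivity. }
      rewrite k1, comp_id_r. exact I1.
    + rewrite <- comp_assoc. exact k2.
Qed.

End JointlyExtremalEpic.

Section Kernels.
Context {E : Cat}.
Variable L : FinComplete E.

Definition kernel_diag {A B : E} (f : Hom A B) : Hom A (pb_ob (pb L f f)) :=
  pb_pair (pb_is (pb L f f)) (idm A) (idm A) eq_refl.

Lemma kernel_diag_p1 {A B : E} (f : Hom A B) : pb_p1 (pb L f f) ∘ kernel_diag f = idm A.
Proof. apply pb_pair_p1. Qed.

Lemma kernel_diag_p2 {A B : E} (f : Hom A B) : pb_p2 (pb L f f) ∘ kernel_diag f = idm A.
Proof. apply pb_pair_p2. Qed.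

Lemma kernel_refl_rel {A B : E} (f : Hom A B) :
  ReflRel (pb_p1 (pb L f f)) (pb_p2 (pb L f f)) (kernel_diag f).
Proof.
  split; [|split; [apply kernel_diag_p1|apply kernel_diag_p2]].
  intros T u v. apply (pullback_ext (pb_is (pb L f f))).
Qed.

Variable Sig : SplitEpiClass E.
Variable HFib : Fibrational Sig.

(* [(d0, s0)] is the pullback of [(pb_p1, delta)] along [s0]. *)
Lemma sig_of_kernel_sig {X1 X0 : E} (d0 : Hom X1 X0) (s0 : Hom X0 X1)
  (delta : Hom X1 (pb_ob (pb L d0 d0))) :
  d0 ∘ s0 = idm X0 ->
  pb_p1 (pb L d0 d0) ∘ delta = idm X1 -> pb_p2 (pb L d0 d0) ∘ delta = idm X1 ->
  Sig _ _ (pb_p1 (pb L d0 d0)) delta -> Sig _ _ d0 s0.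
Proof.
  intros Hds h1 h2 Hs. set (K := pb L d0 d0) in *. pose proof (pb_is K) as HK.
  destruct HFib as [_ HF].
  assert (e : d0 ∘ (s0 ∘ d0) = d0 ∘ idm X1) by (rewrite_chain Hds; reflexivity).
  set (q := pb_pair HK (s0 ∘ d0) (idm X1) e).
  apply (HF _ _ _ _ Hs X0 X1 s0 d0 q); [split| exact Hds|].
  - unfold q; simpl_pairs; reflexivity.
  - intros T a b ab. exists (pb_p2 K ∘ b).
    assert (da : d0 ∘ (pb_p2 K ∘ b) = a).
    { rewrite comp_assoc, <- (pb_comm HK), <- comp_assoc, <- ab.
      rewrite_chain Hds. reflexivity. }
    split; [split|].
    + exact da.
    + apply (pullback_ext HK); unfold q; simpl_pairs; [|reflexivity].
      rewrite da. exact ab.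
    + intros u' [k1 k2]. rewrite <- k2. unfold q; simpl_pairs. reflexivity.
  - apply (pullback_ext HK); unfold q; simpl_pairs; rewrite_chains h1;
      rewrite_chains h2; rewrite_chains Hds; reflexivity.
Qed.

(* [(pb_p2, delta)] is the pullback of [(pb_p1, delta)] along the identity, with
   the swap of the kernel pair as the comparison map. *)
Lemma kernel_sig_swap {A B : E} (f : Hom A B) (delta : Hom A (pb_ob (pb L f f))) :
  pb_p1 (pb L f f) ∘ delta = idm A -> pb_p2 (pb L f f) ∘ delta = idm A ->
  Sig _ _ (pb_p1 (pb L f f)) delta -> Sig _ _ (pb_p2 (pb L f f)) delta.
Proof.
  intros h1 h2 Hs. set (K := pb L f f) in *. pose proof (pb_is K) as HK.
  destruct HFib as [_ HF].
  set (sw := pb_pair HK (pb_p2 K) (pb_p1 K) (eq_sym (pb_comm HK))).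
  assert (ss : sw ∘ sw = idm _)
    by (apply (pullback_ext HK); unfold sw; simpl_pairs; reflexivity).
  apply (HF _ _ _ _ Hs A (pb_ob K) (idm A) (pb_p2 K) sw); [split|exact h2|].
  - unfold sw; simpl_pairs; reflexivity.
  - intros T a b ab. rewrite comp_id_l in ab. exists (sw ∘ b). split; [split|].
    + unfold sw; simpl_pairs; auto.
    + rewrite comp_assoc, ss, comp_id_l. reflexivity.
    + intros u' [k1 k2]. rewrite <- k2, comp_assoc, ss, comp_id_l. reflexivity.
  - apply (pullback_ext HK); unfold sw; simpl_pairs; rewrite_chains h1;
      rewrite_chains h2; reflexivity.
Qed.

End Kernels.

Section EquivalenceRelations.
Context {E : Cat}.
Variable L : FinComplete E.
Variable Sig : SplitEpiClass E.
Variable HFib : Fibrational Sig.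

Lemma kernel_sig_rel_of_pullback {S X : E} (d0 d1 : Hom S X) (s0 : Hom X S)
  (w : Hom (pb_ob (pb L d0 d0)) S) :
  Sig _ _ d0 s0 -> IsPullback d1 d0 (pb_p1 (pb L d0 d0)) w ->
  w ∘ kernel_diag L d0 = s0 ∘ d1 ->
  SigRel Sig (pb_p1 (pb L d0 d0)) (pb_p2 (pb L d0 d0)) (kernel_diag L d0).
Proof.
  intros Hs Hw wd. split; [apply kernel_refl_rel|].
  apply (proj2 HFib _ _ _ _ Hs _ _ _ _ _ Hw); [apply kernel_diag_p1|exact wd].
Qed.

(* Witness: [w (x, y) = tau (sigma x, y)]. *)
Lemma equiv_rel_kernel_pullback {S X : E} (d0 d1 : Hom S X) (s0 : Hom X S) :
  EquivRel L d0 d1 s0 ->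
  exists w, IsPullback d1 d0 (pb_p1 (pb L d0 d0)) w /\ w ∘ kernel_diag L d0 = s0 ∘ d1.
Proof.
  intros [[J [ds0 ds1]] [[sigma [sg0 sg1]] Htau]]. cbv zeta in Htau.
  set (C := pb L d1 d0) in *. pose proof (pb_is C) as HC.
  destruct Htau as [tau [t0 t1]].
  set (K := pb L d0 d0). pose proof (pb_is K) as HK.
  assert (e : d1 ∘ (sigma ∘ pb_p1 K) = d0 ∘ pb_p2 K)
    by (rewrite_chains sg1; apply (pb_comm HK)).
  set (w := tau ∘ pb_pair HC _ _ e).
  assert (W0 : d0 ∘ w = d1 ∘ pb_p1 K)
    by (unfold w; rewrite_chains t0; simpl_pairs; rewrite_chains sg0; reflexivity).
  assert (W1 : d1 ∘ w = d1 ∘ pb_p2 K)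
    by (unfold w; rewrite_chains t1; simpl_pairs; reflexivity).
  exists w. split; [split; [symmetry; exact W0|]|].
  - intros T a b ab. set (c := pb_pair HC a b ab).
    assert (dk : d0 ∘ a = d0 ∘ (tau ∘ c))
      by (rewrite_chains t0; unfold c; simpl_pairs; reflexivity).
    set (k := pb_pair HK a (tau ∘ c) dk).
    assert (wk : w ∘ k = b).
    { apply J.
      - rewrite_chains W0. unfold k; simpl_pairs. exact ab.
      - rewrite_chains W1. unfold k; simpl_pairs. rewrite_chains t1.
        unfold c; simpl_pairs. reflexivity. }
    exists k. split; [split; [unfold k; simpl_pairs; reflexivity|exact wk]|].
    intros k' [k1 k2]. apply (pullback_ext HK).
    + rewrite k1. unfold k; simpl_pairs; reflexivity.
    + apply J.
      * rewrite_chains (eq_sym (pb_comm HK)). rewrite_chains k1.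
        unfold k; simpl_pairs. reflexivity.
      * rewrite_chains (eq_sym W1). rewrite_chains k2. rewrite_chains wk. reflexivity.
  - unfold kernel_diag. apply J.
    + rewrite_chains W0. simpl_pairs. rewrite_chains ds0. reflexivity.
    + rewrite_chains W1. simpl_pairs. rewrite_chains ds1. reflexivity.
Qed.

(* Elements [x R[d1] y R[d0] z] of [S] yield an element from [d0 x] to [d1 z]. *)
Definition Difunctional {S X : E} (d0 d1 : Hom S X) : Prop :=
  let K0 := pb L d0 d0 in
  let K1 := pb L d1 d1 in
  let Q := pb L (pb_p2 K1) (pb_p1 K0) in
  exists e : Hom (pb_ob Q) S,
    d0 ∘ e = d0 ∘ (pb_p1 K1 ∘ pb_p1 Q) /\ d1 ∘ e = d1 ∘ (pb_p2 K0 ∘ pb_p2 Q).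

Lemma difunctional_equiv_rel {S X : E} (d0 d1 : Hom S X) (s0 : Hom X S) :
  ReflRel d0 d1 s0 -> Difunctional d0 d1 -> EquivRel L d0 d1 s0.
Proof.
  intros R [e [e0 e1]]. pose proof R as [_ [ds0 ds1]].
  set (K0 := pb L d0 d0) in *. pose proof (pb_is K0) as HK0.
  set (K1 := pb L d1 d1) in *. pose proof (pb_is K1) as HK1.
  set (Q := pb L (pb_p2 K1) (pb_p1 K0)) in *. pose proof (pb_is Q) as HQ.
  split; [exact R|split].
  - assert (a1 : d1 ∘ (s0 ∘ d1) = d1 ∘ idm S) by (rewrite_chains ds1; reflexivity).
    assert (a0 : d0 ∘ idm S = d0 ∘ (s0 ∘ d0)) by (rewrite_chains ds0; reflexivity).
    assert (a2 : pb_p2 K1 ∘ pb_pair HK1 _ _ a1 = pb_p1 K0 ∘ pb_pair HK0 _ _ a0)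
      by (simpl_pairs; reflexivity).
    exists (e ∘ pb_pair HQ _ _ a2). split.
    + rewrite_chains e0. simpl_pairs. rewrite_chains ds0. reflexivity.
    + rewrite_chains e1. simpl_pairs. rewrite_chains ds1. reflexivity.
  - cbv zeta. set (C := pb L d1 d0). pose proof (pb_is C) as HC.
    assert (a1 : d1 ∘ pb_p1 C = d1 ∘ (s0 ∘ (d1 ∘ pb_p1 C)))
      by (rewrite_chains ds1; reflexivity).
    assert (a0 : d0 ∘ (s0 ∘ (d1 ∘ pb_p1 C)) = d0 ∘ pb_p2 C)
      by (rewrite_chains ds0; apply (pb_comm HC)).
    assert (a2 : pb_p2 K1 ∘ pb_pair HK1 _ _ a1 = pb_p1 K0 ∘ pb_pair HK0 _ _ a0)
      by (simpl_pairs; reflexivity).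
    exists (e ∘ pb_pair HQ _ _ a2). split.
    + rewrite_chains e0. simpl_pairs. reflexivity.
    + rewrite_chains e1. simpl_pairs. reflexivity.
Qed.

Variable HMal : SigmaMaltsev L Sig.

(* Pull the [Σ]-split epimorphism [(pb_p1, delta)] of [R[d0]] back along the split
   epimorphism [pb_p2] of [R[d1]]; the two sections are jointly extremally epic and
   the required map exists on each of them, hence on all of [Q]. *)
Lemma kernel_sig_rel_difunctional {S X : E} (d0 d1 : Hom S X) :
  JointlyMonic d0 d1 -> KernelSigRel L Sig d0 -> Difunctional d0 d1.
Proof.
  intros J. unfold KernelSigRel, Difunctional. cbv zeta.
  set (K0 := pb L d0 d0). pose proof (pb_is K0) as HK0.
  set (K1 := pb L d1 d1). pose proof (pb_is K1) as HK1.
  set (Q := pb L (pb_p2 K1) (pb_p1 K0)). pose proof (pb_is Q) as HQ.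
  intros [delta [h1 [h2 [_ Hs]]]].
  assert (e1 : pb_p2 K1 ∘ idm _ = pb_p1 K0 ∘ (delta ∘ pb_p2 K1))
    by (rewrite_chains h1; reflexivity).
  assert (e2 : pb_p2 K1 ∘ (kernel_diag L d1 ∘ pb_p1 K0) = pb_p1 K0 ∘ idm _)
    by (unfold kernel_diag; simpl_pairs; reflexivity).
  set (s' := pb_pair HQ _ _ e1). set (tb := pb_pair HQ _ _ e2).
  assert (JE : JointlyExtremalEpic s' tb).
  { apply (sigma_maltsev_pullback L Sig HMal Hs (kernel_diag_p2 L d1) HQ);
      unfold s', tb, kernel_diag; simpl_pairs; auto; reflexivity. }
  apply (jointly_extremal_epic_factor L d0 d1 _ _ JE J).
  - exists (pb_p1 K1). unfold s'; simpl_pairs. rewrite_chains h2.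
    split; [reflexivity|apply (pb_comm HK1)].
  - exists (pb_p2 K0). unfold tb, kernel_diag; simpl_pairs.
    split; [symmetry; apply (pb_comm HK0)|reflexivity].
Qed.

Lemma sig_equiv_rel_iff_kernel_sig_rel {S X : E} (d0 d1 : Hom S X) (s0 : Hom X S) :
  ReflRel d0 d1 s0 -> (SigEquivRel L Sig d0 d1 s0 <-> KernelSigRel L Sig d0).
Proof.
  intros R. split.
  - intros [Eq Hs]. destruct (equiv_rel_kernel_pullback _ _ _ Eq) as [w [Hw wd]].
    exists (kernel_diag L d0).
    split; [apply kernel_diag_p1|split; [apply kernel_diag_p2|]].
    exact (kernel_sig_rel_of_pullback _ _ _ _ Hs Hw wd).
  - intros KS. split.
    + apply (difunctional_equiv_rel _ _ _ R), kernel_sig_rel_difunctional;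
        [exact (proj1 R)|exact KS].
    + destruct KS as [delta [h1 [h2 [_ Hs]]]].
      exact (sig_of_kernel_sig L Sig HFib d0 s0 delta (proj1 (proj2 R)) h1 h2 Hs).
Qed.

End EquivalenceRelations.

Section GroupoidKernels.
Context {E : Cat}.
Variable L : FinComplete E.
Variables (X1 X0 : E) (d0 d1 : Hom X1 X0) (s0 : Hom X0 X1).
Notation C := (pb L d1 d0).
Notation K0 := (pb L d0 d0).
Notation K1 := (pb L d1 d1).
Variables (m : Hom (pb_ob C) X1) (i : Hom X1 X1).
Hypotheses (mul_d0 : d0 ∘ m = d0 ∘ pb_p1 C) (mul_d1 : d1 ∘ m = d1 ∘ pb_p2 C).
Hypothesis Hunit_l : forall T (x : Hom T X1) (p : Hom T (pb_ob C)),
  pb_p1 C ∘ p = s0 ∘ d0 ∘ x -> pb_p2 C ∘ p = x -> m ∘ p = x.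
Hypothesis Hunit_r : forall T (x : Hom T X1) (p : Hom T (pb_ob C)),
  pb_p1 C ∘ p = x -> pb_p2 C ∘ p = s0 ∘ d1 ∘ x -> m ∘ p = x.
Hypothesis mul_assoc : forall T (p q r w : Hom T (pb_ob C)),
  pb_p2 C ∘ p = pb_p1 C ∘ r ->
  pb_p1 C ∘ q = m ∘ p -> pb_p2 C ∘ q = pb_p2 C ∘ r ->
  pb_p1 C ∘ w = pb_p1 C ∘ p -> pb_p2 C ∘ w = m ∘ r ->
  m ∘ q = m ∘ w.
Hypotheses (inv_d0 : d0 ∘ i = d1) (inv_d1 : d1 ∘ i = d0).
Hypothesis Hinv_r : forall T (x : Hom T X1) (p : Hom T (pb_ob C)),
  pb_p1 C ∘ p = x -> pb_p2 C ∘ p = i ∘ x -> m ∘ p = s0 ∘ d0 ∘ x.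
Hypothesis Hinv_l : forall T (x : Hom T X1) (p : Hom T (pb_ob C)),
  pb_p1 C ∘ p = i ∘ x -> pb_p2 C ∘ p = x -> m ∘ p = s0 ∘ d1 ∘ x.

Lemma mul_unit_l {T} (x : Hom T X1) (p : Hom T (pb_ob C)) :
  pb_p1 C ∘ p = s0 ∘ (d0 ∘ x) -> pb_p2 C ∘ p = x -> m ∘ p = x.
Proof. intros h1 h2. apply Hunit_l; auto. rewrite <- comp_assoc. exact h1. Qed.

Lemma mul_unit_r {T} (x : Hom T X1) (p : Hom T (pb_ob C)) :
  pb_p1 C ∘ p = x -> pb_p2 C ∘ p = s0 ∘ (d1 ∘ x) -> m ∘ p = x.
Proof. intros h1 h2. apply Hunit_r; auto. rewrite <- comp_assoc. exact h2. Qed.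

Lemma mul_inv_r {T} (x : Hom T X1) (p : Hom T (pb_ob C)) :
  pb_p1 C ∘ p = x -> pb_p2 C ∘ p = i ∘ x -> m ∘ p = s0 ∘ (d0 ∘ x).
Proof. intros h1 h2. rewrite comp_assoc. apply Hinv_r; auto. Qed.

Lemma mul_inv_l {T} (x : Hom T X1) (p : Hom T (pb_ob C)) :
  pb_p1 C ∘ p = i ∘ x -> pb_p2 C ∘ p = x -> m ∘ p = s0 ∘ (d1 ∘ x).
Proof. intros h1 h2. rewrite comp_assoc. apply Hinv_l; auto. Qed.

Lemma composable_comm : d1 ∘ pb_p1 C = d0 ∘ pb_p2 C.
Proof. apply (pb_comm (pb_is C)). Qed.

Lemma inv_mul_mul {T} (a b : Hom T X1) (r q : Hom T (pb_ob C)) :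
  pb_p1 C ∘ r = a -> pb_p2 C ∘ r = b ->
  pb_p1 C ∘ q = i ∘ a -> pb_p2 C ∘ q = m ∘ r -> m ∘ q = b.
Proof.
  intros r1 r2 q1 q2. pose proof (pb_is C) as HC.
  assert (ab : d1 ∘ a = d0 ∘ b)
    by (rewrite <- r1, <- r2; rewrite_chains composable_comm; reflexivity).
  assert (e1 : d1 ∘ (i ∘ a) = d0 ∘ a) by (rewrite_chains inv_d1; reflexivity).
  set (pp := pb_pair HC _ _ e1).
  assert (e2 : d1 ∘ (m ∘ pp) = d0 ∘ b)
    by (rewrite_chains mul_d1; unfold pp; simpl_pairs; exact ab).
  set (qq := pb_pair HC _ _ e2).
  rewrite <- (mul_assoc _ pp qq r q); unfold qq, pp; simpl_pairs; auto.
  apply mul_unit_l; simpl_pairs; auto.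
  rewrite (mul_inv_l a); simpl_pairs; auto. rewrite ab. reflexivity.
Qed.

Lemma mul_inv_mul {T} (a y : Hom T X1) (r q : Hom T (pb_ob C)) :
  pb_p1 C ∘ r = i ∘ a -> pb_p2 C ∘ r = y ->
  pb_p1 C ∘ q = a -> pb_p2 C ∘ q = m ∘ r -> d0 ∘ a = d0 ∘ y -> m ∘ q = y.
Proof.
  intros r1 r2 q1 q2 ay. pose proof (pb_is C) as HC.
  assert (e1 : d1 ∘ a = d0 ∘ (i ∘ a)) by (rewrite_chains inv_d0; reflexivity).
  set (pp := pb_pair HC _ _ e1).
  assert (e2 : d1 ∘ (m ∘ pp) = d0 ∘ y)
    by (rewrite_chains mul_d1; unfold pp; simpl_pairs; rewrite_chains inv_d1; exact ay).
  set (qq := pb_pair HC _ _ e2).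
  rewrite <- (mul_assoc _ pp qq r q); unfold qq, pp; simpl_pairs; auto.
  apply mul_unit_l; simpl_pairs; auto.
  rewrite (mul_inv_r a); simpl_pairs; auto. rewrite ay. reflexivity.
Qed.

(* Witness: the division [w (x, y) = x^-1 y]. *)
Lemma groupoid_kernel_pullback :
  exists w, IsPullback d1 d0 (pb_p1 K0) w /\ w ∘ kernel_diag L d0 = s0 ∘ d1.
Proof.
  pose proof (pb_is C) as HC. pose proof (pb_is K0) as HK0.
  assert (k0c : d0 ∘ pb_p1 K0 = d0 ∘ pb_p2 K0) by apply (pb_comm HK0).
  assert (c0e : d1 ∘ (i ∘ pb_p1 K0) = d0 ∘ pb_p2 K0)
    by (rewrite_chains inv_d1; exact k0c).
  set (c0 := pb_pair HC _ _ c0e). exists (m ∘ c0).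
  assert (W0 : d0 ∘ (m ∘ c0) = d1 ∘ pb_p1 K0)
    by (rewrite_chains mul_d0; unfold c0; simpl_pairs; rewrite_chains inv_d0; reflexivity).
  split; [split; [symmetry; exact W0|]|].
  - intros T a b ab. set (c := pb_pair HC _ _ ab).
    assert (dk : d0 ∘ a = d0 ∘ (m ∘ c))
      by (rewrite_chains mul_d0; unfold c; simpl_pairs; reflexivity).
    set (k := pb_pair HK0 _ _ dk). exists k.
    split; [split; [unfold k; simpl_pairs; reflexivity|]|].
    + normalize. apply (inv_mul_mul a b c (c0 ∘ k)); unfold c0, k, c; simpl_pairs;
        reflexivity.
    + intros k' [q1 q2]. apply (pullback_ext HK0).
      * rewrite q1. unfold k; simpl_pairs; reflexivity.
      * unfold k; simpl_pairs.
        apply (mul_inv_mul a (pb_p2 K0 ∘ k') (c0 ∘ k') c); unfold c0, c; simpl_pairs.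
        -- rewrite q1. reflexivity.
        -- reflexivity.
        -- reflexivity.
        -- rewrite <- q2. normalize. reflexivity.
        -- rewrite <- q1. rewrite_chains k0c. reflexivity.
  - normalize. rewrite (mul_inv_l (idm X1) (c0 ∘ _)); unfold c0, kernel_diag;
      simpl_pairs; reflexivity.
Qed.

(* Witness: [p (x, y, z) = x y^-1 z]. *)
Lemma groupoid_kernel_commute :
  CommZero L (pb_p1 K0) (pb_p2 K0) (kernel_diag L d0)
    (pb_p1 K1) (pb_p2 K1) (kernel_diag L d1).
Proof.
  unfold CommZero. cbv zeta.
  pose proof (pb_is C) as HC. pose proof (pb_is K0) as HK0. pose proof (pb_is K1) as HK1.
  assert (k0c : d0 ∘ pb_p1 K0 = d0 ∘ pb_p2 K0) by apply (pb_comm HK0).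
  assert (k1c : d1 ∘ pb_p1 K1 = d1 ∘ pb_p2 K1) by apply (pb_comm HK1).
  set (P := pb L (pb_p2 K0) (pb_p1 K1)). pose proof (pb_is P) as HP.
  assert (pc : pb_p2 K0 ∘ pb_p1 P = pb_p1 K1 ∘ pb_p2 P) by apply (pb_comm HP).
  assert (ein : d1 ∘ (i ∘ (pb_p2 K0 ∘ pb_p1 P)) = d0 ∘ (pb_p1 K0 ∘ pb_p1 P))
    by (rewrite_chains inv_d1; rewrite_chains k0c; reflexivity).
  set (inner := m ∘ pb_pair HC _ _ ein).
  assert (eout : d1 ∘ (pb_p2 K1 ∘ pb_p2 P) = d0 ∘ inner).
  { unfold inner. rewrite_chains mul_d0. simpl_pairs. rewrite_chains inv_d0.
    rewrite_chains (eq_sym k1c). rewrite_chains (eq_sym pc). reflexivity. }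
  assert (esR : pb_p2 K0 ∘ idm _ = pb_p1 K1 ∘ (kernel_diag L d1 ∘ pb_p2 K0))
    by (unfold kernel_diag; simpl_pairs; reflexivity).
  assert (esS : pb_p2 K0 ∘ (kernel_diag L d0 ∘ pb_p1 K1) = pb_p1 K1 ∘ idm _)
    by (unfold kernel_diag; simpl_pairs; reflexivity).
  exists (m ∘ pb_pair HC _ _ eout), (pb_pair HP _ _ esR), (pb_pair HP _ _ esS).
  do 4 (split; [simpl_pairs; reflexivity|]). split.
  - normalize.
    apply (mul_inv_mul (pb_p2 K0) (pb_p1 K0) (pb_pair HC _ _ ein ∘ pb_pair HP _ _ esR));
      unfold inner, kernel_diag; simpl_pairs; auto.
  - normalize. apply mul_unit_r; simpl_pairs; [reflexivity|]. unfold inner. normalize.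
    rewrite (mul_inv_l (pb_p1 K1)); unfold kernel_diag; simpl_pairs; auto.
    rewrite_chains k1c. reflexivity.
Qed.

End GroupoidKernels.

Section KernelGroupoids.
Context {E : Cat}.
Variable L : FinComplete E.
Variable Sig : SplitEpiClass E.
Variable HFib : Fibrational Sig.
Variable HMal : SigmaMaltsev L Sig.
Variables (X1 X0 : E) (d0 d1 : Hom X1 X0) (s0 : Hom X0 X1).
Hypotheses (ds0 : d0 ∘ s0 = idm X0) (ds1 : d1 ∘ s0 = idm X0).
Notation K0 := (pb L d0 d0).
Notation K1 := (pb L d1 d1).
Notation P := (pb L (pb_p2 K0) (pb_p1 K1)).
Variables (delta0 : Hom X1 (pb_ob K0)) (delta1 : Hom X1 (pb_ob K1)).
Hypotheses (delta0_p1 : pb_p1 K0 ∘ delta0 = idm X1)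
  (delta0_p2 : pb_p2 K0 ∘ delta0 = idm X1)
  (delta1_p1 : pb_p1 K1 ∘ delta1 = idm X1) (delta1_p2 : pb_p2 K1 ∘ delta1 = idm X1).
Hypothesis Hs0 : Sig _ _ (pb_p1 K0) delta0.
Variables (p : Hom (pb_ob P) X1)
  (sR : Hom (pb_ob K0) (pb_ob P)) (sS : Hom (pb_ob K1) (pb_ob P)).
Hypotheses (sR_p1 : pb_p1 P ∘ sR = idm _) (sR_p2 : pb_p2 P ∘ sR = delta1 ∘ pb_p2 K0)
  (sS_p1 : pb_p1 P ∘ sS = delta0 ∘ pb_p1 K1) (sS_p2 : pb_p2 P ∘ sS = idm _)
  (p_sR : p ∘ sR = pb_p1 K0) (p_sS : p ∘ sS = pb_p2 K1).

Let HK0 := pb_is K0.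
Let HK1 := pb_is K1.
Let HP := pb_is P.

(* A generalized element [r] of [P] is a chain [x R[d0] y R[d1] z], with
   [x = pb_p1 K0 ∘ (pb_p1 P ∘ r)], [y] its middle and [z = pb_p2 K1 ∘ (pb_p2 P ∘ r)]. *)
Lemma chain_mid {T} (r : Hom T (pb_ob P)) :
  pb_p1 K1 ∘ (pb_p2 P ∘ r) = pb_p2 K0 ∘ (pb_p1 P ∘ r).
Proof. rewrite !comp_assoc, (pb_comm HP). reflexivity. Qed.

Lemma chain_ext {T} (r r' : Hom T (pb_ob P)) :
  pb_p1 K0 ∘ (pb_p1 P ∘ r) = pb_p1 K0 ∘ (pb_p1 P ∘ r') ->
  pb_p2 K0 ∘ (pb_p1 P ∘ r) = pb_p2 K0 ∘ (pb_p1 P ∘ r') ->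
  pb_p2 K1 ∘ (pb_p2 P ∘ r) = pb_p2 K1 ∘ (pb_p2 P ∘ r') -> r = r'.
Proof.
  intros h1 h2 h3. apply (pullback_ext HP).
  - apply (pullback_ext HK0); normalize; auto.
  - apply (pullback_ext HK1); normalize; auto. rewrite !chain_mid. exact h2.
Qed.

Lemma chain_exists {T} (u v w : Hom T X1) : d0 ∘ u = d0 ∘ v -> d1 ∘ v = d1 ∘ w ->
  exists r, pb_p1 K0 ∘ (pb_p1 P ∘ r) = u /\ pb_p2 K0 ∘ (pb_p1 P ∘ r) = v /\
            pb_p2 K1 ∘ (pb_p2 P ∘ r) = w.
Proof.
  intros e0 e1.
  assert (e : pb_p2 K0 ∘ pb_pair HK0 u v e0 = pb_p1 K1 ∘ pb_pair HK1 v w e1)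
    by (simpl_pairs; reflexivity).
  exists (pb_pair HP _ _ e). simpl_pairs. auto.
Qed.

Lemma p_xyy {T} (r : Hom T (pb_ob P)) :
  pb_p2 K1 ∘ (pb_p2 P ∘ r) = pb_p2 K0 ∘ (pb_p1 P ∘ r) ->
  p ∘ r = pb_p1 K0 ∘ (pb_p1 P ∘ r).
Proof.
  intros h. assert (Er : r = sR ∘ (pb_p1 P ∘ r)).
  { apply chain_ext; rewrite_chains sR_p1; rewrite_chains sR_p2;
      rewrite_chains delta1_p2; auto. }
  rewrite Er at 1. rewrite_chains p_sR. reflexivity.
Qed.

Lemma p_xxz {T} (r : Hom T (pb_ob P)) :
  pb_p1 K0 ∘ (pb_p1 P ∘ r) = pb_p2 K0 ∘ (pb_p1 P ∘ r) ->
  p ∘ r = pb_p2 K1 ∘ (pb_p2 P ∘ r).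
Proof.
  intros h. assert (Er : r = sS ∘ (pb_p2 P ∘ r)).
  { apply chain_ext; rewrite_chains sS_p1; rewrite_chains sS_p2;
      rewrite_chains delta0_p1; rewrite_chains delta0_p2; rewrite ?chain_mid; auto. }
  rewrite Er at 1. rewrite_chains p_sS. reflexivity.
Qed.

Lemma kernel_p2_sig : Sig _ _ (pb_p2 K0) delta0.
Proof. exact (kernel_sig_swap L Sig HFib d0 delta0 delta0_p1 delta0_p2 Hs0). Qed.

Lemma sS_sR_jointly_extremal_epic : JointlyExtremalEpic sS sR.
Proof.
  exact (sigma_maltsev_pullback L Sig HMal kernel_p2_sig delta1_p1 (IsPullback_sym HP)
           sS sR sS_p2 sS_p1 sR_p2 sR_p1).
Qed.

Lemma d0_p : d0 ∘ p = d0 ∘ (pb_p2 K1 ∘ pb_p2 P).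
Proof.
  apply (jointly_extremal_epic_ext L _ _ sS_sR_jointly_extremal_epic); normalize.
  - rewrite_chains p_sS. rewrite_chains sS_p2. reflexivity.
  - rewrite_chains p_sR. rewrite_chains sR_p2. rewrite_chains delta1_p2.
    apply (pb_comm HK0).
Qed.

Lemma d1_p : d1 ∘ p = d1 ∘ (pb_p1 K0 ∘ pb_p1 P).
Proof.
  apply (jointly_extremal_epic_ext L _ _ sS_sR_jointly_extremal_epic); normalize.
  - rewrite_chains p_sS. rewrite_chains sS_p1. rewrite_chains delta0_p1.
    symmetry. apply (pb_comm HK1).
  - rewrite_chains p_sR. rewrite_chains sR_p1. reflexivity.
Qed.

Section Associativity.

(* [Y] consists of pairs [(a, (x, y, z))] with [d1 a = d1 x], and [Q] of triples
   [(k, a, (x, y, z))] with moreover [d0 k = d0 a]; on [Q] both bracketings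
   [p (p (k, a, x), y, z)] and [p (k, a, p (x, y, z))] are defined. *)
Notation Y := (pb L d1 (d1 ∘ (pb_p1 K0 ∘ pb_p1 P))).
Notation Q := (pb L (pb_p1 Y) (pb_p2 K0)).

Lemma Y_section_compat : d1 ∘ idm X1 = d1 ∘ (pb_p1 K0 ∘ pb_p1 P) ∘ (sR ∘ delta0).
Proof. normalize. rewrite_chains sR_p1. rewrite_chains delta0_p1. reflexivity. Qed.

Definition Y_section : Hom X1 (pb_ob Y) := pb_pair (pb_is Y) _ _ Y_section_compat.

Lemma Q_s_compat : pb_p1 Y ∘ idm _ = pb_p2 K0 ∘ (delta0 ∘ pb_p1 Y).
Proof. rewrite_chains delta0_p2. reflexivity. Qed.

Lemma Q_t_compat : pb_p1 Y ∘ (Y_section ∘ pb_p2 K0) = pb_p2 K0 ∘ idm _.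
Proof. unfold Y_section. simpl_pairs. reflexivity. Qed.

Definition Q_s : Hom (pb_ob Y) (pb_ob Q) := pb_pair (pb_is Q) _ _ Q_s_compat.
Definition Q_t : Hom (pb_ob K0) (pb_ob Q) := pb_pair (pb_is Q) _ _ Q_t_compat.

Lemma Q_jointly_extremal_epic : JointlyExtremalEpic Q_s Q_t.
Proof.
  assert (Hgt : pb_p1 Y ∘ Y_section = idm X1)
    by (unfold Y_section; simpl_pairs; reflexivity).
  apply (sigma_maltsev_pullback L Sig HMal kernel_p2_sig Hgt (pb_is Q));
    unfold Q_s, Q_t; simpl_pairs; reflexivity.
Qed.

Variables (AQ CQ DQ : Hom (pb_ob Q) (pb_ob P)).
Hypotheses (AQ1 : pb_p1 K0 ∘ (pb_p1 P ∘ AQ) = pb_p1 K0 ∘ pb_p2 Q)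
  (AQ2 : pb_p2 K0 ∘ (pb_p1 P ∘ AQ) = pb_p2 K0 ∘ pb_p2 Q)
  (AQ3 : pb_p2 K1 ∘ (pb_p2 P ∘ AQ) = pb_p1 K0 ∘ (pb_p1 P ∘ (pb_p2 Y ∘ pb_p1 Q))).
Hypotheses (CQ1 : pb_p1 K0 ∘ (pb_p1 P ∘ CQ) = p ∘ AQ)
  (CQ2 : pb_p2 K0 ∘ (pb_p1 P ∘ CQ) = pb_p2 K0 ∘ (pb_p1 P ∘ (pb_p2 Y ∘ pb_p1 Q)))
  (CQ3 : pb_p2 K1 ∘ (pb_p2 P ∘ CQ) = pb_p2 K1 ∘ (pb_p2 P ∘ (pb_p2 Y ∘ pb_p1 Q))).
Hypotheses (DQ1 : pb_p1 K0 ∘ (pb_p1 P ∘ DQ) = pb_p1 K0 ∘ pb_p2 Q)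
  (DQ2 : pb_p2 K0 ∘ (pb_p1 P ∘ DQ) = pb_p2 K0 ∘ pb_p2 Q)
  (DQ3 : pb_p2 K1 ∘ (pb_p2 P ∘ DQ) = p ∘ (pb_p2 Y ∘ pb_p1 Q)).

(* On [Q_s] the element [k] equals [a], on [Q_t] the chain [(x, y, z)] is
   [(a, a, a)]: in both cases [p_xxz] and [p_xyy] evaluate the two sides. *)
Lemma p_assoc_Q_s : p ∘ (CQ ∘ Q_s) = p ∘ (DQ ∘ Q_s).
Proof.
  assert (cs : CQ ∘ Q_s = pb_p2 Y).
  { apply chain_ext.
    - rewrite_chains CQ1. rewrite p_xxz.
      + rewrite_chains AQ3. unfold Q_s; simpl_pairs. reflexivity.
      + rewrite_chains AQ1. rewrite_chains AQ2. unfold Q_s; simpl_pairs.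
        rewrite_chains delta0_p1. rewrite_chains delta0_p2. reflexivity.
    - rewrite_chains CQ2. unfold Q_s; simpl_pairs. reflexivity.
    - rewrite_chains CQ3. unfold Q_s; simpl_pairs. reflexivity. }
  rewrite cs, (p_xxz (DQ ∘ Q_s)).
  - rewrite_chains DQ3. unfold Q_s; simpl_pairs. reflexivity.
  - rewrite_chains DQ1. rewrite_chains DQ2. unfold Q_s; simpl_pairs.
    rewrite_chains delta0_p1. rewrite_chains delta0_p2. reflexivity.
Qed.

Lemma p_assoc_Q_t : p ∘ (CQ ∘ Q_t) = p ∘ (DQ ∘ Q_t).
Proof.
  transitivity (pb_p1 K0).
  - rewrite p_xyy.
    + rewrite_chains CQ1. rewrite p_xyy.
      * rewrite_chains AQ1. unfold Q_t; simpl_pairs. reflexivity.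
      * rewrite_chains AQ3. rewrite_chains AQ2. unfold Q_t, Y_section; simpl_pairs.
        rewrite_chains sR_p1. rewrite_chains delta0_p1. reflexivity.
    + rewrite_chains CQ3. rewrite_chains CQ2. unfold Q_t, Y_section; simpl_pairs.
      rewrite_chains sR_p2. rewrite_chains sR_p1. rewrite_chains delta1_p2.
      rewrite_chains delta0_p2. reflexivity.
  - rewrite p_xyy.
    + rewrite_chains DQ1. unfold Q_t; simpl_pairs. reflexivity.
    + rewrite_chains DQ3. rewrite_chains DQ2. unfold Q_t, Y_section; simpl_pairs.
      rewrite_chains p_sR. rewrite_chains delta0_p1. reflexivity.
Qed.

Lemma p_assoc_Q : p ∘ CQ = p ∘ DQ.
Proof.
  apply (jointly_extremal_epic_ext L _ _ Q_jointly_extremal_epic); normalize.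
  - exact p_assoc_Q_s.
  - exact p_assoc_Q_t.
Qed.

End Associativity.

Lemma p_assoc {T} (A B C D : Hom T (pb_ob P)) (u v w w' z : Hom T X1)
  (A1 : pb_p1 K0 ∘ (pb_p1 P ∘ A) = u) (A2 : pb_p2 K0 ∘ (pb_p1 P ∘ A) = v)
  (A3 : pb_p2 K1 ∘ (pb_p2 P ∘ A) = w)
  (B1 : pb_p1 K0 ∘ (pb_p1 P ∘ B) = w) (B2 : pb_p2 K0 ∘ (pb_p1 P ∘ B) = w')
  (B3 : pb_p2 K1 ∘ (pb_p2 P ∘ B) = z)
  (C1 : pb_p1 K0 ∘ (pb_p1 P ∘ C) = p ∘ A) (C2 : pb_p2 K0 ∘ (pb_p1 P ∘ C) = w')
  (C3 : pb_p2 K1 ∘ (pb_p2 P ∘ C) = z)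
  (D1 : pb_p1 K0 ∘ (pb_p1 P ∘ D) = u) (D2 : pb_p2 K0 ∘ (pb_p1 P ∘ D) = v)
  (D3 : pb_p2 K1 ∘ (pb_p2 P ∘ D) = p ∘ B) :
  p ∘ C = p ∘ D.
Proof.
  set (Y := pb L d1 (d1 ∘ (pb_p1 K0 ∘ pb_p1 P))). pose proof (pb_is Y) as HY.
  set (Q := pb L (pb_p1 Y) (pb_p2 K0)). pose proof (pb_is Q) as HQ.
  assert (k0c : d0 ∘ pb_p1 K0 = d0 ∘ pb_p2 K0) by apply (pb_comm HK0).
  assert (k1c : d1 ∘ pb_p1 K1 = d1 ∘ pb_p2 K1) by apply (pb_comm HK1).
  assert (f0 : d0 ∘ (pb_p1 K0 ∘ pb_p2 Q) = d0 ∘ (pb_p2 K0 ∘ pb_p2 Q))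
    by (rewrite_chains k0c; reflexivity).
  assert (f1 : d1 ∘ (pb_p2 K0 ∘ pb_p2 Q)
              = d1 ∘ (pb_p1 K0 ∘ (pb_p1 P ∘ (pb_p2 Y ∘ pb_p1 Q)))).
  { rewrite_chains (eq_sym (pb_comm HQ)).
    pose proof (pb_comm HY) as h; normalize; rewrite_chains h. reflexivity. }
  destruct (chain_exists _ _ _ f0 f1) as [AQ [AQ1 [AQ2 AQ3]]].
  assert (g0 : d0 ∘ (p ∘ AQ) = d0 ∘ (pb_p2 K0 ∘ (pb_p1 P ∘ (pb_p2 Y ∘ pb_p1 Q))))
    by (rewrite_chains d0_p; rewrite_chains AQ3; rewrite_chains k0c; reflexivity).
  assert (g1 : d1 ∘ (pb_p2 K0 ∘ (pb_p1 P ∘ (pb_p2 Y ∘ pb_p1 Q)))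
             = d1 ∘ (pb_p2 K1 ∘ (pb_p2 P ∘ (pb_p2 Y ∘ pb_p1 Q))))
    by (rewrite <- chain_mid; rewrite_chains k1c; reflexivity).
  destruct (chain_exists _ _ _ g0 g1) as [CQ [CQ1 [CQ2 CQ3]]].
  assert (h1 : d1 ∘ (pb_p2 K0 ∘ pb_p2 Q) = d1 ∘ (p ∘ (pb_p2 Y ∘ pb_p1 Q)))
    by (rewrite f1; rewrite_chains d1_p; reflexivity).
  destruct (chain_exists _ _ _ f0 h1) as [DQ [DQ1 [DQ2 DQ3]]].
  assert (eY : d1 ∘ v = d1 ∘ (pb_p1 K0 ∘ pb_p1 P) ∘ B)
    by (normalize; rewrite B1, <- A2, <- A3, <- chain_mid; rewrite_chains k1c; reflexivity).
  assert (eK : d0 ∘ u = d0 ∘ v) by (rewrite <- A1, <- A2; rewrite_chains k0c; reflexivity).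
  assert (eQ : pb_p1 Y ∘ pb_pair HY _ _ eY = pb_p2 K0 ∘ pb_pair HK0 _ _ eK)
    by (simpl_pairs; reflexivity).
  set (xi := pb_pair HQ _ _ eQ).
  assert (Aeq : A = AQ ∘ xi).
  { apply chain_ext; normalize; [rewrite_chains AQ1|rewrite_chains AQ2|rewrite_chains AQ3];
      unfold xi; simpl_pairs; congruence. }
  assert (Ceq : C = CQ ∘ xi).
  { apply chain_ext; normalize; [rewrite_chains CQ1|rewrite_chains CQ2|rewrite_chains CQ3];
      unfold xi; simpl_pairs; [rewrite C1, Aeq; normalize; reflexivity|congruence..]. }
  assert (Deq : D = DQ ∘ xi).
  { apply chain_ext; normalize; [rewrite_chains DQ1|rewrite_chains DQ2|rewrite_chains DQ3];
      unfold xi; simpl_pairs; congruence. }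
  rewrite Ceq, Deq, !comp_assoc. f_equal.
  exact (p_assoc_Q _ _ _ AQ1 AQ2 AQ3 CQ1 CQ2 CQ3 DQ1 DQ2 DQ3).
Qed.

Notation C := (pb L d1 d0).

Section Operations.

(* Composition [m (x, y) = p (y, 1, x)] and inverse [i x = p (1, x, 1)]. *)
Variables (Phi : Hom (pb_ob C) (pb_ob P)) (Psi : Hom X1 (pb_ob P)).
Hypotheses (Phi1 : pb_p1 K0 ∘ (pb_p1 P ∘ Phi) = pb_p2 C)
  (Phi2 : pb_p2 K0 ∘ (pb_p1 P ∘ Phi) = s0 ∘ (d1 ∘ pb_p1 C))
  (Phi3 : pb_p2 K1 ∘ (pb_p2 P ∘ Phi) = pb_p1 C).
Hypotheses (Psi1 : pb_p1 K0 ∘ (pb_p1 P ∘ Psi) = s0 ∘ d0)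
  (Psi2 : pb_p2 K0 ∘ (pb_p1 P ∘ Psi) = idm X1)
  (Psi3 : pb_p2 K1 ∘ (pb_p2 P ∘ Psi) = s0 ∘ d1).

Lemma pmul_d0 : d0 ∘ (p ∘ Phi) = d0 ∘ pb_p1 C.
Proof. rewrite_chains d0_p. rewrite_chains Phi3. reflexivity. Qed.

Lemma pmul_d1 : d1 ∘ (p ∘ Phi) = d1 ∘ pb_p2 C.
Proof. rewrite_chains d1_p. rewrite_chains Phi1. reflexivity. Qed.

Lemma pinv_d0 : d0 ∘ (p ∘ Psi) = d1.
Proof. rewrite_chains d0_p. rewrite_chains Psi3. rewrite_chains ds0. reflexivity. Qed.

Lemma pinv_d1 : d1 ∘ (p ∘ Psi) = d0.
Proof. rewrite_chains d1_p. rewrite_chains Psi1. rewrite_chains ds1. reflexivity. Qed.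

Lemma pmul_unit_l {T} (x : Hom T X1) (q : Hom T (pb_ob C)) :
  pb_p1 C ∘ q = s0 ∘ d0 ∘ x -> pb_p2 C ∘ q = x -> p ∘ Phi ∘ q = x.
Proof.
  intros h1 h2. rewrite <- !comp_assoc in h1. normalize. rewrite p_xyy.
  - rewrite_chains Phi1. exact h2.
  - rewrite_chains Phi3. rewrite_chains Phi2. rewrite h1. rewrite_chains ds1. reflexivity.
Qed.

Lemma pmul_unit_r {T} (x : Hom T X1) (q : Hom T (pb_ob C)) :
  pb_p1 C ∘ q = x -> pb_p2 C ∘ q = s0 ∘ d1 ∘ x -> p ∘ Phi ∘ q = x.
Proof.
  intros h1 h2. rewrite <- !comp_assoc in h2. normalize. rewrite p_xxz.
  - rewrite_chains Phi3. exact h1.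
  - rewrite_chains Phi1. rewrite_chains Phi2. rewrite h2, h1. reflexivity.
Qed.

Lemma pmul_assoc {T} (q1 q2 q3 q4 : Hom T (pb_ob C)) :
  pb_p2 C ∘ q1 = pb_p1 C ∘ q3 ->
  pb_p1 C ∘ q2 = p ∘ Phi ∘ q1 -> pb_p2 C ∘ q2 = pb_p2 C ∘ q3 ->
  pb_p1 C ∘ q4 = pb_p1 C ∘ q1 -> pb_p2 C ∘ q4 = p ∘ Phi ∘ q3 ->
  p ∘ Phi ∘ q2 = p ∘ Phi ∘ q4.
Proof.
  intros h1 h2 h3 h4 h5. symmetry. normalize.
  apply (p_assoc (Phi ∘ q3) (Phi ∘ q1) (Phi ∘ q4) (Phi ∘ q2) (pb_p2 C ∘ q3)
           (s0 ∘ (d1 ∘ (pb_p1 C ∘ q3))) (pb_p1 C ∘ q3) (s0 ∘ (d1 ∘ (pb_p1 C ∘ q1)))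
           (pb_p1 C ∘ q1)).
  all: try rewrite_chains Phi1; try rewrite_chains Phi2; try rewrite_chains Phi3;
    try reflexivity.
  - exact h1.
  - rewrite h5. normalize. reflexivity.
  - rewrite h4. reflexivity.
  - exact h4.
  - exact h3.
  - rewrite h2. rewrite_chains pmul_d1. rewrite h1. reflexivity.
  - rewrite h2. normalize. reflexivity.
Qed.

Lemma pmul_inv_r {T} (x : Hom T X1) (q : Hom T (pb_ob C)) :
  pb_p1 C ∘ q = x -> pb_p2 C ∘ q = p ∘ Psi ∘ x -> p ∘ Phi ∘ q = s0 ∘ d0 ∘ x.
Proof.
  intros h1 h2. normalize.
  assert (e1 : d1 ∘ (s0 ∘ (d1 ∘ x)) = d1 ∘ x) by (rewrite_chains ds1; reflexivity).
  destruct (chain_exists _ _ _ eq_refl e1) as [B [B1 [B2 B3]]].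
  assert (pB : p ∘ B = x) by (rewrite p_xxz; [exact B3|rewrite B1, B2; reflexivity]).
  assert (e2 : d0 ∘ (s0 ∘ (d0 ∘ x)) = d0 ∘ x) by (rewrite_chains ds0; reflexivity).
  assert (e3 : d1 ∘ x = d1 ∘ (p ∘ B)) by (rewrite pB; reflexivity).
  destruct (chain_exists _ _ _ e2 e3) as [D [D1 [D2 D3]]].
  transitivity (p ∘ D).
  - apply (p_assoc (Psi ∘ x) B (Phi ∘ q) D (s0 ∘ (d0 ∘ x)) x (s0 ∘ (d1 ∘ x))
             (s0 ∘ (d1 ∘ x)) x); auto;
      try rewrite_chains Psi1; try rewrite_chains Psi2; try rewrite_chains Psi3;
      try rewrite_chains Phi1; try rewrite_chains Phi2; try rewrite_chains Phi3;
      try reflexivity.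
    + rewrite h2. normalize. reflexivity.
    + rewrite h1. reflexivity.
    + exact h1.
  - rewrite p_xyy; [exact D1|]. rewrite D3, D2. exact pB.
Qed.

Lemma pmul_inv_l {T} (x : Hom T X1) (q : Hom T (pb_ob C)) :
  pb_p1 C ∘ q = p ∘ Psi ∘ x -> pb_p2 C ∘ q = x -> p ∘ Phi ∘ q = s0 ∘ d1 ∘ x.
Proof.
  intros h1 h2. normalize.
  assert (e0 : d0 ∘ x = d0 ∘ (s0 ∘ (d0 ∘ x))) by (rewrite_chains ds0; reflexivity).
  destruct (chain_exists _ _ _ e0 eq_refl) as [A [A1 [A2 A3]]].
  assert (pA : p ∘ A = x) by (rewrite p_xyy; [exact A1|rewrite A3, A2; reflexivity]).
  assert (e2 : d0 ∘ (p ∘ A) = d0 ∘ x) by (rewrite pA; reflexivity).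
  assert (e3 : d1 ∘ x = d1 ∘ (s0 ∘ (d1 ∘ x))) by (rewrite_chains ds1; reflexivity).
  destruct (chain_exists _ _ _ e2 e3) as [C' [C1 [C2 C3]]].
  transitivity (p ∘ C').
  - symmetry.
    apply (p_assoc A (Psi ∘ x) C' (Phi ∘ q) x (s0 ∘ (d0 ∘ x)) (s0 ∘ (d0 ∘ x)) x
             (s0 ∘ (d1 ∘ x))); auto;
      try rewrite_chains Psi1; try rewrite_chains Psi2; try rewrite_chains Psi3;
      try rewrite_chains Phi1; try rewrite_chains Phi2; try rewrite_chains Phi3;
      try reflexivity.
    + exact h2.
    + rewrite h1. normalize. rewrite_chains pinv_d1. reflexivity.
    + rewrite h1. normalize. reflexivity.
  - rewrite p_xxz; [exact C3|]. rewrite C1, C2. exact pA.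
Qed.

End Operations.

Lemma kernel_condition_groupoid : IsGroupoid L d0 d1 s0.
Proof.
  split; [split; assumption|]. cbv zeta.
  assert (f0 : d0 ∘ pb_p2 C = d0 ∘ (s0 ∘ (d1 ∘ pb_p1 C)))
    by (rewrite_chains ds0; symmetry; apply (pb_comm (pb_is C))).
  assert (f1 : d1 ∘ (s0 ∘ (d1 ∘ pb_p1 C)) = d1 ∘ pb_p1 C)
    by (rewrite_chains ds1; reflexivity).
  destruct (chain_exists _ _ _ f0 f1) as [Phi [Phi1 [Phi2 Phi3]]].
  assert (g0 : d0 ∘ (s0 ∘ d0) = d0 ∘ idm X1) by (rewrite_chains ds0; reflexivity).
  assert (g1 : d1 ∘ idm X1 = d1 ∘ (s0 ∘ d1)) by (rewrite_chains ds1; reflexivity).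
  destruct (chain_exists _ _ _ g0 g1) as [Psi [Psi1 [Psi2 Psi3]]].
  exists (p ∘ Phi), (p ∘ Psi).
  repeat split; intros; eauto using pmul_d0, pmul_d1, pinv_d0, pinv_d1, pmul_unit_l,
    pmul_unit_r, pmul_assoc, pmul_inv_r, pmul_inv_l.
Qed.

End KernelGroupoids.

Section Groupoids.
Context {E : Cat}.
Variable L : FinComplete E.
Variable Sig : SplitEpiClass E.
Variable HFib : Fibrational Sig.
Variable HMal : SigmaMaltsev L Sig.

Lemma sig_groupoid_kernel_condition {X1 X0 : E} (d0 d1 : Hom X1 X0) (s0 : Hom X0 X1) :
  SigGroupoid L Sig d0 d1 s0 -> KernelCondition L Sig d0 d1.
Proof.
  intros [[_ G] Hs]. cbv zeta in G.
  destruct G as [m [i [m0 [m1 [ul [ur [asc [i0 [i1 [inv_r inv_l]]]]]]]]]].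
  edestruct (groupoid_kernel_pullback L _ _ d0 d1 s0 m i) as [w [Hw wd]]; try eassumption.
  exists (kernel_diag L d0), (kernel_diag L d1).
  do 4 (split; [first [apply kernel_diag_p1|apply kernel_diag_p2]|]).
  split; [exact (kernel_sig_rel_of_pullback L Sig HFib d0 d1 s0 w Hs Hw wd)|].
  eapply groupoid_kernel_commute; eassumption.
Qed.

Lemma kernel_condition_sig_groupoid {X1 X0 : E} (d0 d1 : Hom X1 X0) (s0 : Hom X0 X1) :
  ReflGraph d0 d1 s0 -> KernelCondition L Sig d0 d1 -> SigGroupoid L Sig d0 d1 s0.
Proof.
  intros [ds0 ds1] KC. cbv zeta in KC.
  destruct KC as [delta0 [delta1 [a1 [a2 [b1 [b2 [[_ Hs0] CZ]]]]]]].
  cbv zeta in CZ. destruct CZ as [p [sR [sS [sR1 [sR2 [sS1 [sS2 [psR psS]]]]]]]].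
  split.
  - eapply kernel_condition_groupoid; eassumption.
  - exact (sig_of_kernel_sig L Sig HFib d0 s0 delta0 ds0 a1 a2 Hs0).
Qed.

End Groupoids.

Theorem proposition3p11 (E : Cat) (L : FinComplete E) (Sig : SplitEpiClass E)
  (HSplit : IsSplitEpiClass Sig) (HFib : Fibrational Sig)
  (HMal : SigmaMaltsev L Sig) :
  (forall (X1 X0 : E) (d0 d1 : Hom X1 X0) (s0 : Hom X0 X1),
     ReflGraph d0 d1 s0 ->
     (SigGroupoid L Sig d0 d1 s0 <-> KernelCondition L Sig d0 d1)) /\
  (forall (S X : E) (d0 d1 : Hom S X) (s0 : Hom X S),
     ReflRel d0 d1 s0 ->
     (SigEquivRel L Sig d0 d1 s0 <-> KernelSigRel L Sig d0)).
Proof.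
  split.
  - intros X1 X0 d0 d1 s0 RG. split.
    + apply (sig_groupoid_kernel_condition L Sig HFib).
    + apply (kernel_condition_sig_groupoid L Sig HFib HMal), RG.
  - intros S X d0 d1 s0. apply (sig_equiv_rel_iff_kernel_sig_rel L Sig HFib HMal).
Qed.
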